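(* Let $X$ be a real Hilbert space, let $A,B\colon X\rightrightarrows X$ be maximally monotone, let $T:=T_{(A,B)}$, $v:=P_{\overline{\operatorname{ran}}(\mathrm{Id}-T)}0$. Then: (i) $Z_v=J_{-v+A}(\operatorname{Fix}(T_{-v}))=J_A(\operatorname{Fix}(T_{-v})+v)=J_A(\operatorname{Fix}(v+T))$; (ii) $K_v=(\mathrm{Id}-J_{-v+A})(\operatorname{Fix}(T_{-v}))$; (iii) $K_v\neq\varnothing\iff Z_v\neq\varnothing\iff v\in\operatorname{ran}(\mathrm{Id}-T)$.
   Context: $J_A:=(\mathrm{Id}+A)^{-1}$ is the resolvent, $R_A:=2J_A-\mathrm{Id}$, and the Douglas–Rachford operator is $T_{(A,B)}:=\tfrac12(\mathrm{Id}+R_BR_A)=\mathrm{Id}-J_A+J_BR_A$. For an operator $C$ and $w\in X$: $C^{\vee}:=(-\mathrm{Id})\circ C\circ(-\mathrm{Id})$, $C^{-\vee}:=(C^{-1})^\vee$. The normal pair is $({}_vA,B_v)$ with ${}_vA:=-v+A$ (i.e. $x\mapsto Ax-v$) and $B_v:=B(\cdot-v)$. The set of normal solutions is $Z_v:=({}_vA+B_v)^{-1}(0)$ and the set of dual normal solutions is $K_v:=(({}_vA)^{-1}+(B_v)^{-\vee})^{-1}(0)$. $T_{-v}x:=T(x+v)$, $(v+T)x:=v+Tx$, $\operatorname{Fix}$ is the fixed point set, and $\overline{\operatorname{ran}}$ denotes closure of the range. *)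

From Stdlib Require Import Reals.
Open Scope R_scope.

Record Hilbert := {
  hcar :> Type;
  hzero : hcar;
  hadd : hcar -> hcar -> hcar;
  hopp : hcar -> hcar;
  hscal : R -> hcar -> hcar;
  hinner : hcar -> hcar -> R;
  hadd_assoc : forall x y z, hadd x (hadd y z) = hadd (hadd x y) z;
  hadd_comm : forall x y, hadd x y = hadd y x;
  hadd_0 : forall x, hadd x hzero = x;
  hadd_opp : forall x, hadd x (hopp x) = hzero;
  hscal_assoc : forall a b x, hscal a (hscal b x) = hscal (a * b) x;
  hscal_1 : forall x, hscal 1 x = x;
  hscal_distr_l : forall a x y, hscal a (hadd x y) = hadd (hscal a x) (hscal a y);
  hscal_distr_r : forall a b x, hscal (a + b) x = hadd (hscal a x) (hscal b x);
  hinner_sym : forall x y, hinner x y = hinner y x;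
  hinner_add_l : forall x y z, hinner (hadd x y) z = hinner x z + hinner y z;
  hinner_scal_l : forall a x y, hinner (hscal a x) y = a * hinner x y;
  hinner_pos : forall x, 0 <= hinner x x;
  hinner_def : forall x, hinner x x = 0 -> x = hzero;
  hcomplete : forall u : nat -> hcar,
    (forall eps, 0 < eps -> exists N, forall m n, (N <= m)%nat -> (N <= n)%nat ->
        sqrt (hinner (hadd (u m) (hopp (u n))) (hadd (u m) (hopp (u n)))) < eps) ->
    exists l, forall eps, 0 < eps -> exists N, forall n, (N <= n)%nat ->
        sqrt (hinner (hadd (u n) (hopp l)) (hadd (u n) (hopp l))) < eps
}.

Arguments hzero {h}.
Arguments hadd {h}.
Arguments hopp {h}.
Arguments hscal {h}.
Arguments hinner {h}.

Section Ops.
Variable X : Hilbert.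

Definition hsub (x y : X) : X := hadd x (hopp y).
Definition hnorm (x : X) : R := sqrt (hinner x x).

(* Subsets of X and set-valued operators X ⇉ X (given by their graphs:
   [A x y] means y ∈ A x). *)
Definition subset := X -> Prop.
Definition oper := X -> X -> Prop.

Definition set_eq (S1 S2 : subset) : Prop := forall x, S1 x <-> S2 x.
Definition nonempty (S : subset) : Prop := exists x, S x.

Definition monotone (A : oper) : Prop :=
  forall x u y w, A x u -> A y w -> 0 <= hinner (hsub x y) (hsub u w).

Definition maximally_monotone (A : oper) : Prop :=
  monotone A /\
  forall x u, (forall y w, A y w -> 0 <= hinner (hsub x y) (hsub u w)) -> A x u.

Definition op_inv (C : oper) : oper := fun x y => C y x.
Definition op_add (C D : oper) : oper :=
  fun x y => exists c d, C x c /\ D x d /\ y = hadd c d.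
Definition image (C : oper) (S : subset) : subset :=
  fun y => exists x, S x /\ C x y.
Definition zeros (C : oper) : subset := fun x => C x hzero.
Definition Fix (C : oper) : subset := fun x => C x x.
Definition ran (C : oper) : subset := fun y => exists x, C x y.

(* resolvent J_A = (Id + A)^{-1}: p ∈ J_A x  iff  x ∈ p + A p *)
Definition resolvent (A : oper) : oper := fun x p => A p (hsub x p).
Definition reflected (A : oper) : oper :=
  fun x y => exists p, resolvent A x p /\ y = hsub (hscal 2 p) x.
(* Douglas–Rachford operator T_(A,B) = 1/2 (Id + R_B R_A) *)
Definition DR (A B : oper) : oper :=
  fun x y => exists r s, reflected A x r /\ reflected B r s /\
                         y = hscal (1/2) (hadd x s).
Definition id_minus (C : oper) : oper :=
  fun x y => exists z, C x z /\ y = hsub x z.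

(* C^∨ = (-Id) ∘ C ∘ (-Id) and C^{-∨} = (C^{-1})^∨ *)
Definition vee (C : oper) : oper := fun x y => C (hopp x) (hopp y).
Definition inv_vee (C : oper) : oper := vee (op_inv C).

(* _vA = -v + A,  B_v = B(· - v) *)
Definition lshift (v : X) (A : oper) : oper := fun x y => A x (hadd y v).
Definition rshift (B : oper) (v : X) : oper := fun x y => B (hsub x v) y.

(* T_{-v} x = T(x+v),  (v+T) x = v + T x *)
Definition pre_shift (T : oper) (v : X) : oper := fun x y => T (hadd x v) y.
Definition post_shift (v : X) (T : oper) : oper := fun x y => T x (hsub y v).

Definition translate (S : subset) (v : X) : subset :=
  fun y => exists x, S x /\ y = hadd x v.

Definition closure (S : subset) : subset :=
  fun y => forall eps, 0 < eps -> exists z, S z /\ hnorm (hsub y z) < eps.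

Definition is_proj (C : subset) (x p : X) : Prop :=
  C p /\ forall c, C c -> hnorm (hsub x p) <= hnorm (hsub x c).

Definition Zv (A B : oper) (v : X) : subset :=
  zeros (op_add (lshift v A) (rshift B v)).
Definition Kv (A B : oper) (v : X) : subset :=
  zeros (op_add (op_inv (lshift v A)) (inv_vee (rshift B v))).

End Ops.

Arguments hsub {X}. Arguments hnorm {X}.
Arguments set_eq {X}. Arguments nonempty {X}.
Arguments monotone {X}. Arguments maximally_monotone {X}.
Arguments op_inv {X}. Arguments op_add {X}. Arguments image {X}.
Arguments zeros {X}. Arguments Fix {X}. Arguments ran {X}.
Arguments resolvent {X}. Arguments reflected {X}. Arguments DR {X}.
Arguments id_minus {X}. Arguments vee {X}. Arguments inv_vee {X}.
Arguments lshift {X}. Arguments rshift {X}. Arguments pre_shift {X}.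
Arguments post_shift {X}. Arguments translate {X}. Arguments closure {X}.
Arguments is_proj {X}. Arguments Zv {X}. Arguments Kv {X}.

From Stdlib Require Import Reals Lra.

(* A point x is a fixed point of T_{-v} exactly when p := J_{-v+A} x satisfies
   x - p + v ∈ A p and p - x ∈ B (p - v), i.e. when p is a normal solution
   whose certificate c := x - p is a dual normal solution; conversely a normal
   solution z with certificate c yields the fixed point z + c.  Monotonicity
   of A makes p unique; nothing else is needed, and the identities hold for
   every v, not only for the projection of 0 onto the closure of ran (Id - T). *)

Section HilbertAlgebra.
Variable X : Hilbert.

Lemma hinner_zero_l (w : X) : hinner hzero w = 0.
Proof.
  pose proof (hinner_add_l X hzero hzero w) as E. rewrite hadd_0 in E. lra.
Qed.

Lemma hinner_opp_l (x w : X) : hinner (hopp x) w = - hinner x w.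
Proof.
  pose proof (hinner_add_l X x (hopp x) w) as E. rewrite hadd_opp, hinner_zero_l in E. lra.
Qed.

Lemma hsub_eq0 (a b : X) : hsub a b = hzero -> a = b.
Proof.
  unfold hsub. intro E.
  rewrite <- (hadd_0 X a), <- (hadd_opp X b), (hadd_comm X b), hadd_assoc, E.
  rewrite hadd_comm. apply hadd_0.
Qed.

Lemma hext (a b : X) : (forall w, hinner a w = hinner b w) -> a = b.
Proof.
  intro H. apply hsub_eq0, hinner_def. unfold hsub.
  rewrite hinner_add_l, hinner_opp_l, H. lra.
Qed.

End HilbertAlgebra.

Hint Rewrite hinner_add_l hinner_scal_l hinner_opp_l hinner_zero_l : hinner.

(* Proves a linear identity between vectors, using the vector equations in
   the context, by testing both sides against an arbitrary w. *)
Ltac lin :=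
  apply hext; let w := fresh "w" in intro w;
  repeat match goal with
  | E : @eq (hcar _) _ _ |- _ => apply (f_equal (fun t => hinner t w)) in E
  end;
  unfold hsub in *; autorewrite with hinner in *; lra.

Section Resolvents.
Variable X : Hilbert.
Implicit Types (A : oper X) (v x p q : X).

Lemma monotone_lshift A v : monotone A -> monotone (lshift v A).
Proof.
  intros HA x u y w Hu Hw.
  replace (hsub u w) with (hsub (hadd u v) (hadd w v)) by lin.
  exact (HA _ _ _ _ Hu Hw).
Qed.

Lemma resolvent_unique A x p q :
  monotone A -> resolvent A x p -> resolvent A x q -> p = q.
Proof.
  intros HA Hp Hq. pose proof (HA _ _ _ _ Hp Hq) as M.
  replace (hsub (hsub x p) (hsub x q)) with (hscal (-1) (hsub p q)) in M by lin.
  rewrite hinner_sym, hinner_scal_l in M.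
  apply hsub_eq0, hinner_def. pose proof (hinner_pos X (hsub p q)). lra.
Qed.

Lemma resolvent_lshift A v x p :
  resolvent (lshift v A) x p <-> resolvent A (hadd x v) p.
Proof.
  unfold resolvent, lshift.
  replace (hadd (hsub x p) v) with (hsub (hadd x v) p) by lin. reflexivity.
Qed.

Lemma image_resolvent_lshift A v (S : subset X) :
  set_eq (image (resolvent (lshift v A)) S) (image (resolvent A) (translate S v)).
Proof.
  intro p. split.
  - intros [x [Sx Hx]]. exists (hadd x v).
    split; [exists x; split; [exact Sx | reflexivity] | exact (proj1 (resolvent_lshift _ _ _ _) Hx)].
  - intros [y [[x [Sx ->]] Hy]]. exists x.
    split; [exact Sx | exact (proj2 (resolvent_lshift _ _ _ _) Hy)].
Qed.

Lemma image_set_eq (C : oper X) (S1 S2 : subset X) :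
  set_eq S1 S2 -> set_eq (image C S1) (image C S2).
Proof.
  intros E y. split; intros [x [Sx Cx]]; exists x; split; try apply E; assumption.
Qed.

Lemma translate_Fix_pre_shift (T : oper X) v :
  set_eq (translate (Fix (pre_shift T v)) v) (Fix (post_shift v T)).
Proof.
  intro y. unfold translate, Fix, pre_shift, post_shift. split.
  - intros [x [Hx ->]]. replace (hsub (hadd x v) v) with x by lin. exact Hx.
  - intro Hy. exists (hsub y v). replace (hadd (hsub y v) v) with y by lin. split; [exact Hy | lin].
Qed.

Lemma nonempty_Fix_pre_shift (T : oper X) v :
  nonempty (Fix (pre_shift T v)) <-> ran (id_minus T) v.
Proof.
  unfold nonempty, Fix, pre_shift, ran, id_minus. split.
  - intros [x Hx]. exists (hadd x v), x. split; [exact Hx | lin].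
  - intros [y [x [Hx Ev]]]. exists x. replace (hadd x v) with y by lin. exact Hx.
Qed.

End Resolvents.

Section DouglasRachford.
Variable X : Hilbert.
Variables (A B : oper X) (v : X).

Lemma Fix_pre_shift_DR x :
  Fix (pre_shift (DR A B) v) x <->
  exists p, resolvent (lshift v A) x p /\ B (hsub p v) (hsub p x).
Proof.
  setoid_rewrite resolvent_lshift. split.
  - intros [r [s [[p [Hp ->]] [[q [Hq ->]] Ex]]]]. exists p. split; [exact Hp |].
    assert (Eq : q = hsub p v) by lin. subst q.
    replace (hsub p x) with (hsub (hsub (hscal 2 p) (hadd x v)) (hsub p v)) by lin.
    exact Hq.
  - intros [p [Hp Hq]].
    exists (hsub (hscal 2 p) (hadd x v)),
           (hsub (hscal 2 (hsub p v)) (hsub (hscal 2 p) (hadd x v))).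
    split; [exists p; split; [exact Hp | reflexivity] |].
    split; [exists (hsub p v); split; [| reflexivity] | lin].
    unfold resolvent.
    replace (hsub (hsub (hscal 2 p) (hadd x v)) (hsub p v)) with (hsub p x) by lin.
    exact Hq.
Qed.

Lemma Zv_iff z : Zv A B v z <-> exists c, A z (hadd c v) /\ B (hsub z v) (hopp c).
Proof.
  split.
  - intros [c [d [Hc [Hd E]]]]. exists c. split; [exact Hc |].
    replace (hopp c) with d by lin. exact Hd.
  - intros [c [Hc Hd]]. exists c, (hopp c). do 2 (split; [assumption |]).
    symmetry. apply hadd_opp.
Qed.

Lemma Kv_iff y : Kv A B v y <-> exists c, A c (hadd y v) /\ B (hsub c v) (hopp y).
Proof.
  unfold Kv, zeros, op_add, op_inv, inv_vee, vee, lshift, rshift. split.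
  - intros [c [d [Hc [Hd E]]]]. exists c. split; [exact Hc |].
    replace c with (hopp d) by lin. exact Hd.
  - intros [c [Hc Hd]]. exists c, (hopp c).
    split; [exact Hc |]. split; [| symmetry; apply hadd_opp].
    replace (hopp (hopp c)) with c by lin. exact Hd.
Qed.

Lemma nonempty_Kv_iff_Zv : nonempty (Kv A B v) <-> nonempty (Zv A B v).
Proof.
  split; intros [y Hy].
  - apply Kv_iff in Hy as [c Hc]. exists c. apply Zv_iff. now exists y.
  - apply Zv_iff in Hy as [c Hc]. exists c. apply Kv_iff. now exists y.
Qed.

Hypothesis HA : monotone A.

Lemma Fix_pre_shift_DR_resolvent x p :
  Fix (pre_shift (DR A B) v) x -> resolvent (lshift v A) x p ->
  B (hsub p v) (hsub p x).
Proof.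
  intros [q [Hq HBq]]%Fix_pre_shift_DR Hp.
  rewrite <- (resolvent_unique _ _ _ _ _ (monotone_lshift _ _ _ HA) Hq Hp). exact HBq.
Qed.

Lemma Zv_image_Fix :
  set_eq (Zv A B v) (image (resolvent (lshift v A)) (Fix (pre_shift (DR A B) v))).
Proof.
  intro z. rewrite Zv_iff. unfold image, resolvent, lshift. split.
  - intros [c [Hc Hd]].
    replace (hadd c v) with (hadd (hsub (hadd z c) z) v) in Hc by lin.
    exists (hadd z c). split; [| exact Hc].
    apply Fix_pre_shift_DR. exists z. split; [exact Hc |].
    replace (hsub z (hadd z c)) with (hopp c) by lin. exact Hd.
  - intros [x [Hx Hz]]. exists (hsub x z). split; [exact Hz |].
    replace (hopp (hsub x z)) with (hsub z x) by lin.
    exact (Fix_pre_shift_DR_resolvent _ _ Hx Hz).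
Qed.

Lemma Kv_image_Fix :
  set_eq (Kv A B v)
    (image (id_minus (resolvent (lshift v A))) (Fix (pre_shift (DR A B) v))).
Proof.
  intro y. rewrite Kv_iff. unfold image, id_minus. split.
  - intros [c [Hc Hd]].
    assert (Hres : resolvent (lshift v A) (hadd y c) c).
    { unfold resolvent, lshift. replace (hadd (hsub (hadd y c) c) v) with (hadd y v) by lin.
      exact Hc. }
    exists (hadd y c). split; [| exists c; split; [exact Hres | lin]].
    apply Fix_pre_shift_DR. exists c. split; [exact Hres |].
    replace (hsub c (hadd y c)) with (hopp y) by lin. exact Hd.
  - intros [x [Hx [z [Hz ->]]]]. exists z. split; [exact Hz |].
    replace (hopp (hsub x z)) with (hsub z x) by lin.
    exact (Fix_pre_shift_DR_resolvent _ _ Hx Hz).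
Qed.

Lemma nonempty_Zv_iff_Fix :
  nonempty (Zv A B v) <-> nonempty (Fix (pre_shift (DR A B) v)).
Proof.
  split.
  - intros [z [x [Hx _]]%Zv_image_Fix]. now exists x.
  - intros [x Hx]. destruct (proj1 (Fix_pre_shift_DR x) Hx) as [p [Hp _]].
    exists p. apply Zv_image_Fix. now exists x.
Qed.

End DouglasRachford.

Theorem lemma4p1 (X : Hilbert) (A B : oper X) (v : X) :
  maximally_monotone A -> maximally_monotone B ->
  is_proj (closure (ran (id_minus (DR A B)))) hzero v ->
  (* (i) *)
  (set_eq (Zv A B v) (image (resolvent (lshift v A)) (Fix (pre_shift (DR A B) v))) /\
   set_eq (Zv A B v) (image (resolvent A) (translate (Fix (pre_shift (DR A B) v)) v)) /\
   set_eq (Zv A B v) (image (resolvent A) (Fix (post_shift v (DR A B))))) /\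
  (* (ii) *)
  set_eq (Kv A B v)
    (image (id_minus (resolvent (lshift v A))) (Fix (pre_shift (DR A B) v))) /\
  (* (iii) *)
  ((nonempty (Kv A B v) <-> nonempty (Zv A B v)) /\
   (nonempty (Zv A B v) <-> ran (id_minus (DR A B)) v)).
Proof.
  intros [HA _] _ _.
  pose proof (Zv_image_Fix _ _ B v HA) as Zi.
  assert (Zii : set_eq (Zv A B v)
               (image (resolvent A) (translate (Fix (pre_shift (DR A B) v)) v))).
  { intro z. rewrite (Zi z). apply image_resolvent_lshift. }
  split; [split; [exact Zi | split; [exact Zii |]] | split].
  - intro z. rewrite (Zii z). apply image_set_eq, translate_Fix_pre_shift.
  - exact (Kv_image_Fix _ _ B v HA).
  - split; [apply nonempty_Kv_iff_Zv |].
    rewrite nonempty_Zv_iff_Fix by exact HA. apply nonempty_Fix_pre_shift.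
Qed.
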